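(* Let $\alpha_2\approx0.2797707433$ be the root in $[0,1]$ of $8\alpha^4-8\alpha^3+8\alpha^2=1/2$ and let $\alpha_2\le\alpha\le 1/3$. If $(x,y)\in A_2$ and $G_\alpha(x,y),G_\alpha^2(x,y)\in A_1$, then $G_\alpha^3(x,y)\in A_2$; i.e., a point coming from $A_2$ remains in $A_1$ for at most $2$ consecutive steps.
   Context: Let $\tau:[0,1]\to[0,1]$ be the symmetric tent map, $\tau(x)=2x$ for $0\le x<1/2$ and $\tau(x)=2-2x$ for $1/2\le x\le 1$. For $0<\alpha<1$ define $G_\alpha:[0,1]^2\to[0,1]^2$ by $G_\alpha(x,y)=(y,\tau(\alpha y+(1-\alpha)x))$. Let $S(x,y)=\alpha y+(1-\alpha)x$, $A_1=\{(x,y)\in[0,1]^2: S(x,y)<1/2\}$ and $A_2=\{(x,y)\in[0,1]^2: S(x,y)\ge 1/2\}$. *)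

From Stdlib Require Import Reals Lra.
Open Scope R_scope.

Definition tent (x : R) : R := if Rlt_dec x (1/2) then 2 * x else 2 - 2 * x.

Definition Sfun (alpha : R) (p : R * R) : R := alpha * snd p + (1 - alpha) * fst p.

Definition G (alpha : R) (p : R * R) : R * R := (snd p, tent (Sfun alpha p)).

Fixpoint Giter (alpha : R) (n : nat) (p : R * R) : R * R :=
  match n with
  | O => p
  | S k => G alpha (Giter alpha k p)
  end.

Definition in_unit_square (p : R * R) : Prop :=
  0 <= fst p <= 1 /\ 0 <= snd p <= 1.

Definition regionA1 (alpha : R) (p : R * R) : Prop := in_unit_square p /\ Sfun alpha p < 1/2.
Definition regionA2 (alpha : R) (p : R * R) : Prop := in_unit_square p /\ Sfun alpha p >= 1/2.

(** The first step leaves [A_2] on the right branch of the tent map, the next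
    two on the left branch, so [S] at the third iterate is an explicit
    polynomial in [alpha], [y] and [z1 = tent (S (x, y))].  Since [z1 >= 2 alpha (1 - y)],
    it is bounded below by [f(alpha) (1 - y) + g(alpha) y], with
    [f(alpha) = 8 alpha^4 - 8 alpha^3 + 8 alpha^2] increasing on [[0, oo)] (so
    [f(alpha) >= f(alpha_2) = 1/2]) and [g(alpha) = (1 - alpha) (4 alpha^2 - 2 alpha + 2) >= 1]
    for [alpha <= 1/2].  A convex combination of numbers [>= 1/2] is [>= 1/2]. *)

From Stdlib Require Import Reals Lra Psatz.
Open Scope R_scope.

Lemma tent_lt_half (s : R) : s < 1/2 -> tent s = 2 * s.
Proof. unfold tent; destruct (Rlt_dec s (1/2)); [reflexivity | lra]. Qed.

Lemma tent_ge_half (s : R) : 1/2 <= s -> tent s = 2 - 2 * s.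
Proof. unfold tent; destruct (Rlt_dec s (1/2)); [lra | reflexivity]. Qed.

Lemma tent_unit_interval (s : R) : 0 <= s <= 1 -> 0 <= tent s <= 1.
Proof. unfold tent; destruct (Rlt_dec s (1/2)); lra. Qed.

Lemma Sfun_unit_interval (alpha : R) (p : R * R) :
  0 <= alpha <= 1 -> in_unit_square p -> 0 <= Sfun alpha p <= 1.
Proof.
  destruct p as [u v]; unfold in_unit_square, Sfun; simpl; intros Ha [Hu Hv].
  split; nra.
Qed.

Lemma G_in_unit_square (alpha : R) (p : R * R) :
  0 <= alpha <= 1 -> in_unit_square p -> in_unit_square (G alpha p).
Proof.
  intros Ha Hp; split; simpl.
  - exact (proj2 Hp).
  - exact (tent_unit_interval _ (Sfun_unit_interval _ _ Ha Hp)).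
Qed.

Lemma quartic_nondecreasing (a b : R) : 0 <= b -> b <= a ->
  8 * b ^ 4 - 8 * b ^ 3 + 8 * b ^ 2 <= 8 * a ^ 4 - 8 * a ^ 3 + 8 * a ^ 2.
Proof.
  intros Hb Hba.
  assert (Hfactor : 8 * a ^ 4 - 8 * a ^ 3 + 8 * a ^ 2 - (8 * b ^ 4 - 8 * b ^ 3 + 8 * b ^ 2)
    = 8 * (a - b) * ((a + b) * (a ^ 2 + b ^ 2) - (a ^ 2 + a * b + b ^ 2) + (a + b))) by ring.
  (* With [u = a + b]: the bracket is at least [u - u^2 + u^3/2 = u ((u - 1)^2 + 1) / 2]. *)
  assert (Hbracket : 0 <= (a + b) * (a ^ 2 + b ^ 2) - (a ^ 2 + a * b + b ^ 2) + (a + b)).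
  { assert (2 * (a ^ 2 + b ^ 2) >= (a + b) ^ 2) by nra.
    assert (a ^ 2 + a * b + b ^ 2 <= (a + b) ^ 2) by nra.
    assert (0 <= (a + b) * ((a + b - 1) ^ 2 + 1)) by (apply Rmult_le_pos; nra).
    nra. }
  assert (0 <= 8 * (a - b) * ((a + b) * (a ^ 2 + b ^ 2) - (a ^ 2 + a * b + b ^ 2) + (a + b)))
    by (apply Rmult_le_pos; lra).
  lra.
Qed.

Lemma cubic_ge_1 (a : R) : a <= 1/2 -> 1 <= (1 - a) * (4 * a ^ 2 - 2 * a + 2).
Proof.
  intros Ha.
  assert (Hid : (1 - a) * (4 * a ^ 2 - 2 * a + 2) = 1 + ((1 - a) ^ 2 - a ^ 2) * ((1 - a) ^ 2 + a ^ 2))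
    by ring.
  assert (0 <= ((1 - a) ^ 2 - a ^ 2) * ((1 - a) ^ 2 + a ^ 2)).
  { apply Rmult_le_pos.
    - replace ((1 - a) ^ 2 - a ^ 2) with (1 - 2 * a) by ring; lra.
    - pose proof (pow2_ge_0 (1 - a)); pose proof (pow2_ge_0 a); lra. }
  lra.
Qed.

Lemma G_left_branch (alpha : R) (p : R * R) :
  Sfun alpha p < 1/2 -> G alpha p = (snd p, 2 * Sfun alpha p).
Proof. intros HS; unfold G; rewrite (tent_lt_half _ HS); reflexivity. Qed.

Lemma G_right_branch (alpha : R) (p : R * R) :
  1/2 <= Sfun alpha p -> G alpha p = (snd p, 2 - 2 * Sfun alpha p).
Proof. intros HS; unfold G; rewrite (tent_ge_half _ HS); reflexivity. Qed.

Lemma Sfun_Giter3_lower_bound (alpha x y : R) :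
  0 <= alpha <= 1 -> x <= 1 ->
  1/2 <= Sfun alpha (x, y) ->
  Sfun alpha (Giter alpha 1 (x, y)) < 1/2 ->
  Sfun alpha (Giter alpha 2 (x, y)) < 1/2 ->
  (8 * alpha ^ 4 - 8 * alpha ^ 3 + 8 * alpha ^ 2) * (1 - y)
    + (1 - alpha) * (4 * alpha ^ 2 - 2 * alpha + 2) * y
  <= Sfun alpha (Giter alpha 3 (x, y)).
Proof.
  intros Ha Hx HS0 HS1 HS2; simpl Giter in *.
  rewrite (G_right_branch _ _ HS0) in *; simpl snd in *.
  rewrite (G_left_branch _ _ HS1) in *; simpl snd in *.
  rewrite (G_left_branch _ _ HS2).
  set (z1 := 2 - 2 * Sfun alpha (x, y)).
  assert (Hz1 : 2 * alpha * (1 - y) <= z1).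
  { unfold z1, Sfun; simpl.
    assert (0 <= (1 - alpha) * (1 - x)) by (apply Rmult_le_pos; lra).
    lra. }
  unfold Sfun at 1 2 3 4; simpl fst; simpl snd.
  (* Two left-branch steps make S affine in [z1] and [y]. *)
  replace (alpha * (2 * (alpha * (2 * (alpha * z1 + (1 - alpha) * y)) + (1 - alpha) * z1))
           + (1 - alpha) * (2 * (alpha * z1 + (1 - alpha) * y)))
    with ((4 * alpha ^ 3 - 4 * alpha ^ 2 + 4 * alpha) * z1
          + (1 - alpha) * (4 * alpha ^ 2 - 2 * alpha + 2) * y) by ring.
  assert (Hd : 0 <= 4 * alpha ^ 3 - 4 * alpha ^ 2 + 4 * alpha) by nra.
  assert ((4 * alpha ^ 3 - 4 * alpha ^ 2 + 4 * alpha) * (2 * alpha * (1 - y))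
          <= (4 * alpha ^ 3 - 4 * alpha ^ 2 + 4 * alpha) * z1)
    by (apply Rmult_le_compat_l; assumption).
  nra.
Qed.

Theorem proposition10 (alpha2 alpha x y : R) :
  0 <= alpha2 <= 1 ->
  8 * alpha2 ^ 4 - 8 * alpha2 ^ 3 + 8 * alpha2 ^ 2 = 1/2 ->
  alpha2 <= alpha <= 1/3 ->
  regionA2 alpha (x, y) ->
  regionA1 alpha (Giter alpha 1%nat (x, y)) ->
  regionA1 alpha (Giter alpha 2%nat (x, y)) ->
  regionA2 alpha (Giter alpha 3%nat (x, y)).
Proof.
  intros Halpha2 Hroot Halpha [[[_ Hx] Hy] HS0] [_ HS1] [Hsq2 HS2].
  assert (Ha : 0 <= alpha <= 1) by lra.
  split.
  - exact (G_in_unit_square alpha _ Ha Hsq2).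
  - pose proof (Sfun_Giter3_lower_bound alpha x y Ha Hx (Rge_le _ _ HS0) HS1 HS2)
      as Hbound.
    pose proof (quartic_nondecreasing alpha alpha2 (proj1 Halpha2) (proj1 Halpha)) as Hf.
    pose proof (cubic_ge_1 alpha ltac:(lra)) as Hg.
    simpl in Hy.
    assert (1/2 * (1 - y) <= (8 * alpha ^ 4 - 8 * alpha ^ 3 + 8 * alpha ^ 2) * (1 - y))
      by (apply Rmult_le_compat_r; lra).
    assert (1/2 * y <= (1 - alpha) * (4 * alpha ^ 2 - 2 * alpha + 2) * y)
      by (apply Rmult_le_compat_r; lra).
    lra.
Qed.
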